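(* For all $n\ge0$ and $j=0,1,2$, \[ c_{3n+j}^2=\delta_{j,0}+(1-\delta_{j,0})c_{j-1}^2+\sum_{k=1}^n\left\{c_{3k+j-1}^2+2\sum_{i=0}^{3(k-1)+j}p_{3k+j-1-i}c_i^2\right\}. \]
   Context: The Narayana's cows numbers $c_n$ are defined by $c_n=\delta_{n,0}+c_{n-1}+c_{n-3}$ for $n\ge0$, $c_n=0$ for $n<0$. The Padovan numbers $p_n$ are defined by $p_n=\delta_{n,0}+p_{n-2}+p_{n-3}$ for $n\ge0$, $p_n=0$ for $n<0$. $\delta_{i,j}$ is $1$ if $i=j$ and $0$ otherwise. Empty sums are $0$. *)

From mathcomp Require Import all_boot.
Set Implicit Arguments. Unset Strict Implicit. Unset Printing Implicit Defensive.

(* Narayana's cows numbers: c_n = [n=0] + c_{n-1} + c_{n-3}, c_n = 0 for n<0.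
   Unfolded for n >= 0: c_0 = c_1 = c_2 = 1, c_{n+3} = c_{n+2} + c_n. *)
Fixpoint cow (n : nat) : nat :=
  match n with
  | 0 | 1 | 2 => 1
  | S (S (S m as m1) as m2) => cow m2 + cow m
  end.

(* Padovan numbers: p_n = [n=0] + p_{n-2} + p_{n-3}, p_n = 0 for n<0.
   Unfolded: p_0 = 1, p_1 = 0, p_2 = 1, p_{n+3} = p_{n+1} + p_n. *)
Fixpoint padovan (n : nat) : nat :=
  match n with
  | 0 => 1
  | 1 => 0
  | 2 => 1
  | S (S (S m as m1)) => padovan m1 + padovan m
  end.

Definition delta (i j : nat) : nat := if i == j then 1 else 0.

Lemma cow_vals : [seq cow n | n <- iota 0 10] = [:: 1;1;1;2;3;4;6;9;13;19].
Proof. by []. Qed.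
Lemma padovan_vals : [seq padovan n | n <- iota 0 10] = [:: 1;0;1;1;1;2;2;3;4;5].
Proof. by []. Qed.

From mathcomp Require Import all_boot.
From mathcomp Require Import zify.

(* Squaring c_{m+3} = c_{m+2} + c_m leaves the cross term 2 c_{m+2} c_m, and
   c_{m+2} c_m is the convolution of the c_i^2 with the shifted Padovan numbers
   p_{i+2}: both sides satisfy S_{m+3} = S_{m+1} + S_m + c_{m+2}^2 + c_{m+3}^2
   and agree for m = 0, 1, 2. The identity then telescopes in steps of 3. *)

Lemma cowSSS (m : nat) : cow m.+3 = cow m.+2 + cow m.
Proof. by []. Qed.

Lemma padovanSSS (m : nat) : padovan m.+3 = padovan m.+1 + padovan m.
Proof. by []. Qed.

Definition padovan_conv (a : nat -> nat) (m : nat) : nat :=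
  \sum_(0 <= i < m.+1) padovan i.+2 * a (m - i).

Lemma padovan_convE (a : nat -> nat) (m : nat) :
  \sum_(0 <= i < m.+1) padovan (m.+2 - i) * a i = padovan_conv a m.
Proof.
rewrite big_nat_rev; apply: eq_big_nat => i /andP[_ lt_im].
by rewrite add0n subSS; congr (padovan _ * _); lia.
Qed.

Lemma padovan_convSSS (a : nat -> nat) (m : nat) :
  padovan_conv a m.+3 =
    a m.+3 + (padovan_conv a m.+1 + (a m.+2 + padovan_conv a m)).
Proof.
rewrite /padovan_conv big_nat_recl // subn0 mul1n.
under eq_bigr => i _ do rewrite subSS padovanSSS mulnDl.
rewrite big_split; congr (_ + (_ + _)).
  by rewrite big_nat_recl // mul0n.
by rewrite !big_nat_recl // mul1n mul0n subn0.
Qed.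

Lemma cow_mul_padovan_conv (m : nat) :
  cow m.+2 * cow m = padovan_conv (fun i => cow i ^ 2) m.
Proof.
elim/ltn_ind: m => -[|[|[|m]]] IH; try by rewrite /padovan_conv unlock.
by rewrite padovan_convSSS -!IH ?cowSSS; lia.
Qed.

Lemma cow_sqSSS (m : nat) :
  cow m.+3 ^ 2 = cow m ^ 2 + (cow m.+2 ^ 2 + 2 * padovan_conv (fun i => cow i ^ 2) m).
Proof. by rewrite cowSSS sqrnD cow_mul_padovan_conv addnCA addnA. Qed.

Theorem mainTheorem15 (n j : nat) (hj : j <= 2) :
  cow (3 * n + j) ^ 2 =
    delta j 0 + (1 - delta j 0) * cow (j - 1) ^ 2 +
    \sum_(1 <= k < n.+1)
       (cow (3 * k + j - 1) ^ 2 +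
        2 * \sum_(0 <= i < (3 * (k - 1) + j).+1)
              padovan (3 * k + j - 1 - i) * cow i ^ 2).
Proof.
elim: n => [|n IH].
  by rewrite big_geq //; case: j hj => [|[|[|]]].
rewrite big_nat_recr // addnA -IH.
have -> : 3 * n.+1 + j - 1 = (3 * n + j).+2 by lia.
have -> : 3 * (n.+1 - 1) + j = 3 * n + j by lia.
have -> : 3 * n.+1 + j = (3 * n + j).+3 by lia.
by rewrite padovan_convE cow_sqSSS.
Qed.
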